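(* Let $\Omega$ be a domain in $\mathbb{C}^n$ satisfying property BR, and suppose that the absolute Bergman projection $P^+_{\Omega}:L^{p_0}(\Omega)\to L^{p_0}(\Omega)$ is bounded for some $1<p_0<\infty$. Then the Berezin transform $B_{\Omega}$ extends to a bounded operator $B_{\Omega}:L^p(\Omega)\to L^p(\Omega)$ for all $p_0\leq p\leq \infty$, and \[\|B_{\Omega}\|_{L^{p_0}} \leq \sup\left\{\frac{|K_{\Omega}(w,z)|}{K_{\Omega}(z,z)}:z,w\in \Omega \right\} \|P^+_{\Omega}\|_{L^{p_0}}.\]
   Context: For a domain $\Omega\subset\mathbb{C}^n$, $A^2(\Omega)$ is the Bergman space of square-integrable holomorphic functions, and $K_{\Omega}:\Omega\times\Omega\to\mathbb{C}$ is its Bergman kernel (the reproducing kernel of the orthogonal projection $P_\Omega:L^2(\Omega)\to A^2(\Omega)$). $\Omega$ satisfies property BR if $K_{\Omega}(z,z)\neq 0$ for all $z\in\Omega$ and $\sup\{|K_{\Omega}(w,z)|/K_{\Omega}(z,z): z,w\in\Omega\}<\infty$. When $K_\Omega(z,z)\neq0$ for all $z$, the normalized kernel is $k_z^{\Omega}(w)=K_{\Omega}(w,z)/\sqrt{K_{\Omega}(z,z)}$, and the Berezin transform of $\phi\in L^\infty(\Omega)$ is $B_{\Omega}\phi(z)=\langle P_\Omega(\phi k^\Omega_z),k^\Omega_z\rangle=\int_\Omega \phi(w)\,\frac{|K_{\Omega}(w,z)|^2}{K_{\Omega}(z,z)}\,dV(w)$. The absolute Bergman projection is $P^+_{\Omega}f(z)=\int_{\Omega}|K_{\Omega}(z,w)|f(w)\,dV(w)$.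 $\|\cdot\|_{L^p}$ denotes the $L^p(\Omega)$ norm (with respect to Lebesgue measure $dV$) and the corresponding operator norm. *)

(* Complex numbers: R[i] (mathcomp-real-closed),
   C^n := 'rV[R[i]]_n with its canonical normed-module structure over R[i];
   Lebesgue measure on C^n = R^{2n} realised through iterated (Tonelli)
   integrals of Lebesgue measure on R. *)
From HB Require Import structures.
From mathcomp Require Import all_boot all_order all_algebra.
From mathcomp Require Import all_classical all_reals all_analysis.
From mathcomp Require Import complex.
Import Order.TTheory GRing.Theory Num.Theory.

Set Implicit Arguments.
Unset Strict Implicit.
Unset Printing Implicit Defensive.

Local Open Scope classical_set_scope.
Local Open Scope ring_scope.

(** Iterated Lebesgue integral on R^m of a nonnegative function
    (= integral w.r.t. m-dimensional Lebesgue measure for Borel functions,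
    by Tonelli). *)
Fixpoint iint (R : realType) (m : nat) : (m.-tuple R -> \bar R) -> \bar R :=
  match m return (m.-tuple R -> \bar R) -> \bar R with
  | 0 => fun f => f [tuple]
  | m'.+1 => fun f =>
      (\int[@lebesgue_measure R]_x iint (fun t => f (cons_tuple x t)))%E
  end.

Definition toC (R : realType) (n : nat) (x y : n.-tuple R) : 'rV[R[i]]_n :=
  \row_j Complex (tnth x j) (tnth y j).

Definition vint (R : realType) (n : nat) (g : 'rV[R[i]]_n -> \bar R) : \bar R :=
  iint (fun x : n.-tuple R => iint (fun y : n.-tuple R => g (toC x y))).

Definition vint_on (R : realType) (n : nat) (Om : set 'rV[R[i]]_n)
  (g : 'rV[R[i]]_n -> \bar R) : \bar R :=
  vint (fun z => if `[< Om z >] then g z else 0%E).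

Definition restr (R : realType) (n : nat) (Om : set 'rV[R[i]]_n)
  (f : 'rV[R[i]]_n -> R[i]) : 'rV[R[i]]_n -> R[i] :=
  fun z => if `[< Om z >] then f z else 0.

Definition Cmeasurable (R : realType) (n : nat) (f : 'rV[R[i]]_n -> R[i]) :=
  measurable_fun setT (fun p : n.-tuple R * n.-tuple R => complex.Re (f (toC p.1 p.2)))
  /\ measurable_fun setT (fun p : n.-tuple R * n.-tuple R => complex.Im (f (toC p.1 p.2))).

Definition Cmeasurable_set (R : realType) (n : nat) (A : set 'rV[R[i]]_n) :=
  measurable [set p : n.-tuple R * n.-tuple R | A (toC p.1 p.2)].

Definition cabs (R : realType) (x : R[i]) : R := complex.Re `|x|.

Definition Lpnorm (R : realType) (n : nat) (Om : set 'rV[R[i]]_n) (p : \bar R)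
  (f : 'rV[R[i]]_n -> R[i]) : \bar R :=
  match p with
  | r%:E => (vint_on Om (fun z => ((cabs (f z)) `^ r)%:E) `^ r^-1)%E
  | +oo%E => ereal_inf [set M%:E | M in
        [set M : R | vint_on Om (fun z => ((((M < cabs (f z))%R : bool))%:R : R)%:E) = 0%E]]
  | -oo%E => +oo%E
  end.

Definition Lp (R : realType) (n : nat) (Om : set 'rV[R[i]]_n) (p : \bar R)
  (f : 'rV[R[i]]_n -> R[i]) : Prop :=
  Cmeasurable (restr Om f) /\ (Lpnorm Om p f < +oo)%E.

Definition cintegrable (R : realType) (n : nat) (Om : set 'rV[R[i]]_n)
  (h : 'rV[R[i]]_n -> R[i]) : Prop :=
  Cmeasurable (restr Om h) /\ (vint_on Om (fun z => (cabs (h z))%:E) < +oo)%E.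

Definition rint (R : realType) (n : nat) (Om : set 'rV[R[i]]_n)
  (u : 'rV[R[i]]_n -> R) : R :=
  fine (vint_on Om (fun z => (Num.max (u z) 0)%:E))
  - fine (vint_on Om (fun z => (Num.max (- u z) 0)%:E)).

Definition cint (R : realType) (n : nat) (Om : set 'rV[R[i]]_n)
  (h : 'rV[R[i]]_n -> R[i]) : R[i] :=
  Complex (rint Om (fun z => complex.Re (h z))) (rint Om (fun z => complex.Im (h z))).

Definition ae_on (R : realType) (n : nat) (Om : set 'rV[R[i]]_n)
  (P : 'rV[R[i]]_n -> Prop) : Prop :=
  exists N : set 'rV[R[i]]_n, Cmeasurable_set N /\
    vint (fun z => ((`[< N z >] : bool)%:R : R)%:E) = 0%E /\
    forall z, Om z -> ~ N z -> P z.

Definition domain (R : realType) (n : nat) (Om : set 'rV[R[i]]_n) : Prop :=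
  @open ('rV[R[i]]_n : normedModType R[i]) Om /\
  @connected ('rV[R[i]]_n : normedModType R[i]) Om /\ Om !=set0.

Definition holomorphic_on (R : realType) (n : nat) (Om : set 'rV[R[i]]_n)
  (f : 'rV[R[i]]_n -> R[i]) : Prop :=
  forall z, Om z -> differentiable (f : ('rV[R[i]]_n : normedModType R[i]) -> (R[i])^o)
    (z : ('rV[R[i]]_n : normedModType R[i])).

Definition A2 (R : realType) (n : nat) (Om : set 'rV[R[i]]_n)
  (f : 'rV[R[i]]_n -> R[i]) : Prop :=
  holomorphic_on Om f /\ Lp Om 2%:E f.

(** K is the Bergman kernel of Omega: K(.,z) in A^2 and
    f(z) = <f, K(.,z)> = int_Omega f(w) conj(K(w,z)) dV(w) for f in A^2.
    (This determines K uniquely on Omega x Omega.) *)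
Definition bergman_kernel (R : realType) (n : nat) (Om : set 'rV[R[i]]_n)
  (K : 'rV[R[i]]_n -> 'rV[R[i]]_n -> R[i]) : Prop :=
  (forall z, Om z -> A2 Om (fun w => K w z)) /\
  (forall f, A2 Om f -> forall z, Om z ->
     f z = cint Om (fun w => f w * conjc (K w z))).

Definition BR_sup (R : realType) (n : nat) (Om : set 'rV[R[i]]_n)
  (K : 'rV[R[i]]_n -> 'rV[R[i]]_n -> R[i]) : \bar R :=
  ereal_sup [set r | exists z w, Om z /\ Om w /\
                       r = (complex.Re (`|K w z| / K z z))%:E].

Definition property_BR (R : realType) (n : nat) (Om : set 'rV[R[i]]_n)
  (K : 'rV[R[i]]_n -> 'rV[R[i]]_n -> R[i]) : Prop :=
  (forall z, Om z -> K z z != 0) /\ (BR_sup Om K < +oo)%E.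

Definition Pplus (R : realType) (n : nat) (Om : set 'rV[R[i]]_n)
  (K : 'rV[R[i]]_n -> 'rV[R[i]]_n -> R[i]) (f : 'rV[R[i]]_n -> R[i]) :
  'rV[R[i]]_n -> R[i] :=
  fun z => cint Om (fun w => `|K z w| * f w).

Definition berezin (R : realType) (n : nat) (Om : set 'rV[R[i]]_n)
  (K : 'rV[R[i]]_n -> 'rV[R[i]]_n -> R[i]) (phi : 'rV[R[i]]_n -> R[i]) :
  'rV[R[i]]_n -> R[i] :=
  fun z => cint Om (fun w => phi w * (`|K w z| ^+ 2 / K z z)).

Definition Pplus_bound (R : realType) (n : nat) (Om : set 'rV[R[i]]_n)
  (K : 'rV[R[i]]_n -> 'rV[R[i]]_n -> R[i]) (p : R) (M : R) : Prop :=
  0 <= M /\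
  forall f, Lp Om p%:E f ->
    ae_on Om (fun z => cintegrable Om (fun w => `|K z w| * f w)) /\
    (Lpnorm Om p%:E (Pplus Om K f) <= M%:E * Lpnorm Om p%:E f)%E.

Definition Pplus_norm (R : realType) (n : nat) (Om : set 'rV[R[i]]_n)
  (K : 'rV[R[i]]_n -> 'rV[R[i]]_n -> R[i]) (p : R) : \bar R :=
  ereal_inf [set M%:E | M in [set M | Pplus_bound Om K p M]].

(** C bounds B on L^infty cap L^p in the L^p norm; for p < oo this is
    equivalent to B extending (uniquely, by density) to a bounded operator
    on L^p with norm <= C. *)
Definition berezin_bound (R : realType) (n : nat) (Om : set 'rV[R[i]]_n)
  (K : 'rV[R[i]]_n -> 'rV[R[i]]_n -> R[i]) (p : \bar R) (C : R) : Prop :=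
  0 <= C /\
  forall phi, Lp Om +oo%E phi -> Lp Om p phi ->
    (Lpnorm Om p (berezin Om K phi) <= C%:E * Lpnorm Om p phi)%E.

Definition berezin_norm (R : realType) (n : nat) (Om : set 'rV[R[i]]_n)
  (K : 'rV[R[i]]_n -> 'rV[R[i]]_n -> R[i]) (p : \bar R) : \bar R :=
  ereal_inf [set C%:E | C in [set C | berezin_bound Om K p C]].

From HB Require Import structures.
From mathcomp Require Import all_boot all_order all_algebra.
From mathcomp Require Import all_classical all_reals all_analysis.
From mathcomp Require Import complex.
From mathcomp Require Import measurable_realfun.
From mathcomp Require Import ring lra.
Import Order.TTheory GRing.Theory Num.Theory.
Local Open Scope classical_set_scope.
Local Open Scope ring_scope.
Set Implicit Arguments.
Unset Strict Implicit.
Unset Printing Implicit Defensive.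

(* Let S be the BR constant and k_z(w) = |K(w, z)|^2 / K(z, z); then k_z is a
   probability density on Omega, B phi(z) is the mean of phi against k_z, and
   k_z(w) <= S |K(z, w)| because |K(w, z)| = |K(z, w)|.  For p0 <= r and
   q = r / p0 >= 1, Jensen's inequality gives
     |B phi(z)|^q <= int |phi|^q k_z <= S P^+(|phi|^q)(z),
   so integrating the p0-th power and using the bound M of P^+ on L^p0 yields
   ||B phi||_r^r <= (S M)^p0 ||phi||_r^r; r = p0 gives the norm estimate.
   For r = oo, |B phi| <= ||phi||_oo since k_z has mass one. *)

Import HBNNSimple.

Section ge0_integral.
Local Open Scope ereal_scope.
Context d (T : measurableType d) (R : realType).
Variable mu : {measure set T -> \bar R}.

Lemma le_ge0_integral (f g : T -> \bar R) : (forall x, 0 <= f x) ->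
  (forall x, f x <= g x) -> \int[mu]_x f x <= \int[mu]_x g x.
Proof.
move=> f0 fg; have g0 x : 0 <= g x by apply: le_trans (fg x).
rewrite !ge0_integralTE//; apply: ereal_sup_le => _ [h /= hf <-].
by exists h => //= x; apply: le_trans (fg x).
Qed.

Lemma le_ge0_integral_ae (N : set T) (f g : T -> \bar R) :
  measurable N -> mu N = 0 -> (forall x, 0 <= f x) -> (forall x, 0 <= g x) ->
  (forall x, ~ N x -> f x <= g x) -> \int[mu]_x f x <= \int[mu]_x g x.
Proof.
move=> mN N0 f0 g0 fg; rewrite [X in X <= _]ge0_integralTE//.
apply: ge_ereal_sup => _ [h /= hf <-].
rewrite -integralT_nnsfun (ae_eq_integral ((EFin \o h) \_ (~` N))) //.
- apply: le_ge0_integral => [x|x]; rewrite /patch; case: ifPn => //= xN.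
  + by rewrite lee_fin.
  + by apply: le_trans (fg x _); [exact: hf | move: xN; rewrite inE].
- by apply/measurable_EFinP; exact: measurable_funP.
- apply/(measurable_restrictT _ _).1; first exact: measurableC.
  by apply/measurable_EFinP; exact: measurable_funP.
- exists N; split => // x /= /not_implyP [_ hx]; apply: contrapT => Nx.
  by apply: hx; rewrite /patch/= ifT// inE.
Qed.

Lemma integralZl_ge0 (c : R) (f : T -> \bar R) : (0 <= c)%R ->
  (forall x, 0 <= f x) -> \int[mu]_x (c%:E * f x) = c%:E * \int[mu]_x f x.
Proof.
have Zle (k : R) (h : T -> \bar R) : (0 < k)%R -> (forall x, 0 <= h x) ->
    \int[mu]_x (k%:E * h x) <= k%:E * \int[mu]_x h x.
  move=> k0 h0; rewrite ge0_integralTE; last by move=> x; rewrite mule_ge0// lee_fin ltW.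
  apply: ge_ereal_sup => _ [s /= sh <-]; rewrite -integralT_nnsfun.
  have -> : (fun x => (s x)%:E) = (fun x => k%:E * (k^-1 * s x)%:E).
    by apply: funext => x; rewrite -EFinM mulrA divff ?mul1r // gt_eqF.
  rewrite ge0_integralZl_EFin //; last by rewrite ltW.
  - rewrite lee_pmul2l ?lte_fin//; apply: le_ge0_integral => x.
      by rewrite lee_fin mulr_ge0// invr_ge0 ltW.
    by rewrite -(@lee_pmul2l _ k%:E) ?lte_fin// -EFinM mulrA divff ?mul1r ?gt_eqF.
  - by move=> x _; rewrite lee_fin mulr_ge0// invr_ge0 ltW.
  - by apply/measurable_EFinP; apply: measurable_funM => //; exact: measurable_funP.
move=> c0 f0; have [->|cneq0] := eqVneq c 0%R.
  by rewrite mul0e; apply: integral0_eq => x _; rewrite mul0e.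
have cpos : (0 < c)%R by rewrite lt_def cneq0.
apply/eqP; rewrite eq_le Zle //=.
have cinv : (0 < c^-1)%R by rewrite invr_gt0.
have cf0 x : 0 <= c%:E * f x by rewrite mule_ge0 // lee_fin ltW.
have := Zle _ _ cinv cf0.
under eq_integral do rewrite muleA -EFinM mulVf ?gt_eqF// mul1e.
move=> Zinv.
rewrite -(@lee_pmul2l _ c^-1%:E) ?lte_fin ?invr_gt0//.
by rewrite muleA -EFinM mulVf ?gt_eqF// mul1e.
Qed.

End ge0_integral.

Section iterated_integral.
Local Open Scope ereal_scope.
Variable R : realType.
Local Notation leb := (@lebesgue_measure R).

Lemma measurable_fun_cons_tuple m (f : m.+1.-tuple R -> \bar R) (x : R) :
  measurable_fun setT f -> measurable_fun setT (fun t => f (cons_tuple x t)).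
Proof.
move=> mf; have mcons := measurable_cons (measurable_cst x) (@measurable_id _ (m.-tuple R) setT).
by have := measurableT_comp mf mcons; apply.
Qed.

Lemma iint_ge0 m (f : m.-tuple R -> \bar R) : (forall t, 0 <= f t) -> 0 <= iint f.
Proof.
elim: m f => [|m IH] f f0 /=; first exact: f0.
by apply: integral_ge0 => x _; apply: IH.
Qed.

Lemma le_iint m (f g : m.-tuple R -> \bar R) : (forall t, 0 <= f t) ->
  (forall t, f t <= g t) -> iint f <= iint g.
Proof.
elim: m f g => [|m IH] f g f0 fg /=; first exact: fg.
by apply: le_ge0_integral => x; [apply: iint_ge0 | apply: IH].
Qed.

Lemma iintZl m (c : R) (f : m.-tuple R -> \bar R) : (0 <= c)%R ->
  (forall t, 0 <= f t) -> iint (fun t => c%:E * f t) = c%:E * iint f.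
Proof.
elim: m f => [|m IH] f c0 f0 //=.
under eq_integral do rewrite IH //.
by apply: integralZl_ge0 => // x; apply: iint_ge0.
Qed.

Lemma measurable_iint m d (A : measurableType d) (f : A * m.-tuple R -> \bar R) :
  measurable_fun setT f -> (forall x, 0 <= f x) ->
  measurable_fun setT (fun a => iint (fun t => f (a, t))).
Proof.
elim: m d A f => [|m IH] d A f mf f0 /=; first exact: measurable_fun_pair1.
pose g q := f (q.1.1, cons_tuple q.1.2 q.2) : \bar R.
have mg : measurable_fun setT g.
  apply: measurableT_comp mf (measurable_fun_pair _ _).
    exact: measurableT_comp measurable_fst measurable_fst.
  exact: measurable_cons (measurableT_comp measurable_snd measurable_fst) measurable_snd.
by have := @measurable_fun_fubini_tonelli_F _ _ A _ R leb _
  (IH _ _ g mg (fun q => f0 _)) (fun q => iint_ge0 (fun t => f0 _)).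
Qed.

Lemma measurable_iint_cons m (f : m.+1.-tuple R -> \bar R) :
  measurable_fun setT f -> (forall t, 0 <= f t) ->
  measurable_fun setT (fun x => iint (fun t => f (cons_tuple x t))).
Proof.
move=> mf f0; apply: (measurable_iint (f := fun q => f (cons_tuple q.1 q.2))) => //.
by have := measurableT_comp mf (measurable_cons measurable_fst measurable_snd); apply.
Qed.

Lemma iintD m (f g : m.-tuple R -> \bar R) :
  measurable_fun setT f -> measurable_fun setT g ->
  (forall t, 0 <= f t) -> (forall t, 0 <= g t) ->
  iint (fun t => f t + g t) = iint f + iint g.
Proof.
elim: m f g => [|m IH] f g mf mg f0 g0 //=.
transitivity (\int[leb]_x (iint (fun t => f (cons_tuple x t)) +
                          iint (fun t => g (cons_tuple x t)))).
  by apply: eq_integral => x _; apply: IH => //; exact: measurable_fun_cons_tuple.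
by apply: ge0_integralD => //; [move=> x _; apply: iint_ge0 |
  exact: measurable_iint_cons | move=> x _; apply: iint_ge0 | exact: measurable_iint_cons].
Qed.

Lemma le_iint_ae m (h f g : m.-tuple R -> \bar R) :
  measurable_fun setT h -> (forall t, 0 <= h t) -> iint h = 0 ->
  (forall t, 0 <= f t) -> (forall t, 0 <= g t) ->
  (forall t, h t = 0 -> f t <= g t) -> iint f <= iint g.
Proof.
elim: m h f g => [|m IH] h f g mh h0 hi0 f0 g0 fg /=; first exact: fg.
pose H x := iint (fun t => h (cons_tuple x t)).
have mH : measurable_fun setT H by exact: measurable_iint_cons.
have H0 : \int[leb]_x `|H x| = 0.
  by rewrite -hi0; apply: eq_integral => x _; rewrite gee0_abs // iint_ge0.
have [N [mN N0 sN]] := (ae_eq_integral_abs leb measurableT mH).1 H0.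
apply: (le_ge0_integral_ae mN N0); try by move=> x; apply: iint_ge0.
move=> x Nx; apply: (IH (fun t => h (cons_tuple x t))) => //.
- exact: measurable_fun_cons_tuple.
- by apply: contrapT => Hx; apply: Nx; apply: sN => /= /(_ I).
- by move=> t; apply: fg.
Qed.

End iterated_integral.

Section volume_integral.
Local Open Scope ereal_scope.
Variables (R : realType) (n : nat).
Local Notation V := 'rV[R[i]]_n.

Definition Vmeasurable (g : V -> \bar R) :=
  measurable_fun setT (fun p : n.-tuple R * n.-tuple R => g (toC p.1 p.2)).

Lemma measurable_vint_section (g : V -> \bar R) : Vmeasurable g ->
  (forall z, 0 <= g z) -> measurable_fun setT (fun x => iint (fun y => g (toC x y))).
Proof.
move=> mg g0.
exact: (measurable_iint (f := fun p : n.-tuple R * n.-tuple R => g (toC p.1 p.2))).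
Qed.

Lemma vint_ge0 (g : V -> \bar R) : (forall z, 0 <= g z) -> 0 <= vint g.
Proof. by move=> g0; apply: iint_ge0 => x; apply: iint_ge0. Qed.

Lemma le_vint (f g : V -> \bar R) : (forall z, 0 <= f z) ->
  (forall z, f z <= g z) -> vint f <= vint g.
Proof. by move=> f0 fg; apply: le_iint => x; [apply: iint_ge0 | apply: le_iint]. Qed.

Lemma vintZl (c : R) (f : V -> \bar R) : (0 <= c)%R -> (forall z, 0 <= f z) ->
  vint (fun z => c%:E * f z) = c%:E * vint f.
Proof.
move=> c0 f0; rewrite /vint -iintZl //; last by move=> x; apply: iint_ge0.
by congr iint; apply: funext => x; rewrite iintZl.
Qed.

Lemma vintD (f g : V -> \bar R) : Vmeasurable f -> Vmeasurable g ->
  (forall z, 0 <= f z) -> (forall z, 0 <= g z) ->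
  vint (fun z => f z + g z) = vint f + vint g.
Proof.
move=> mf mg f0 g0; rewrite /vint -iintD; try exact: measurable_vint_section;
  try by move=> x; apply: iint_ge0.
congr iint; apply: funext => x.
by rewrite iintD //; [exact: (measurable_fun_pair2 x mf) | exact: (measurable_fun_pair2 x mg)].
Qed.

Lemma le_vint_ae (h f g : V -> \bar R) : Vmeasurable h -> (forall z, 0 <= h z) ->
  vint h = 0 -> (forall z, 0 <= f z) -> (forall z, 0 <= g z) ->
  (forall z, h z = 0 -> f z <= g z) -> vint f <= vint g.
Proof.
move=> mh h0 hi0 f0 g0 fg.
apply: (le_iint_ae (measurable_vint_section mh h0)) hi0 _ _ _;
  try by move=> x; apply: iint_ge0.
move=> x hx; apply: (le_iint_ae (measurable_fun_pair2 x mh)) hx _ _ _ => //.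
by move=> y; apply: fg.
Qed.

End volume_integral.

Section restricted_measurability.
Variables (R : realType) (n : nat).
Local Notation V := 'rV[R[i]]_n.
Variable Om : set V.

Definition restrR (u : V -> R) (z : V) : R := if `[< Om z >] then u z else 0.

Definition Rmeasurable (u : V -> R) :=
  measurable_fun setT (fun p : n.-tuple R * n.-tuple R => restrR u (toC p.1 p.2)).

Lemma eq_Rmeasurable u v : (forall z, Om z -> u z = v z) -> Rmeasurable u -> Rmeasurable v.
Proof.
move=> uv; rewrite /Rmeasurable (_ : restrR u = restrR v) //; apply: funext => z.
by rewrite /restrR; case: asboolP => // /uv.
Qed.

Lemma Rmeasurable_comp (G : R -> R) u : G 0 = 0 -> measurable_fun setT G ->
  Rmeasurable u -> Rmeasurable (fun z => G (u z)).
Proof.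
move=> G0 mG mu; rewrite /Rmeasurable (_ : (fun p => _) =
  G \o (fun p : n.-tuple R * n.-tuple R => restrR u (toC p.1 p.2))).
  exact: measurableT_comp.
by apply: funext => p /=; rewrite /restrR; case: asboolP.
Qed.

Lemma RmeasurableD u v : Rmeasurable u -> Rmeasurable v -> Rmeasurable (fun z => u z + v z).
Proof.
move=> mu mv; rewrite /Rmeasurable (_ : (fun p => _) =
  (fun p : n.-tuple R * n.-tuple R => restrR u (toC p.1 p.2)) \+ (fun p => restrR v (toC p.1 p.2))).
  exact: measurable_funD.
by apply: funext => p /=; rewrite /restrR; case: asboolP => //; rewrite addr0.
Qed.

Lemma RmeasurableM u v : Rmeasurable u -> Rmeasurable v -> Rmeasurable (fun z => u z * v z).
Proof.
move=> mu mv; rewrite /Rmeasurable (_ : (fun p => _) =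
  (fun p : n.-tuple R * n.-tuple R => restrR u (toC p.1 p.2)) \* (fun p => restrR v (toC p.1 p.2))).
  exact: measurable_funM.
by apply: funext => p /=; rewrite /restrR; case: asboolP => //; rewrite mulr0.
Qed.

Lemma RmeasurableZl (c : R) u : Rmeasurable u -> Rmeasurable (fun z => c * u z).
Proof.
apply: (@Rmeasurable_comp (fun x => c * x)); first by rewrite mulr0.
exact: measurable_funM.
Qed.

Lemma RmeasurableN u : Rmeasurable u -> Rmeasurable (fun z => - u z).
Proof.
apply: (@Rmeasurable_comp (fun x => - x)); first by rewrite oppr0.
exact: measurable_funN.
Qed.

Lemma Rmeasurable_powR (q : R) u : q != 0 -> Rmeasurable u ->
  Rmeasurable (fun z => u z `^ q).
Proof. by move=> q0; apply: (@Rmeasurable_comp (fun x => x `^ q)); rewrite ?powR0. Qed.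

Lemma Rmeasurable0 : Rmeasurable (fun _ => 0).
Proof.
rewrite /Rmeasurable (_ : (fun p => _) = cst 0) //; apply: funext => p /=.
by rewrite /restrR; case: asboolP.
Qed.

Lemma Rmeasurable_Re (h : V -> R[i]) : Cmeasurable (restr Om h) ->
  Rmeasurable (fun z => complex.Re (h z)).
Proof.
case=> mRe _; rewrite /Rmeasurable (_ : (fun p => _) =
  (fun p : n.-tuple R * n.-tuple R => complex.Re (restr Om h (toC p.1 p.2)))) //.
by apply: funext => p /=; rewrite /restrR /restr; case: asboolP.
Qed.

Lemma Rmeasurable_Im (h : V -> R[i]) : Cmeasurable (restr Om h) ->
  Rmeasurable (fun z => complex.Im (h z)).
Proof.
case=> _ mIm; rewrite /Rmeasurable (_ : (fun p => _) =
  (fun p : n.-tuple R * n.-tuple R => complex.Im (restr Om h (toC p.1 p.2)))) //.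
by apply: funext => p /=; rewrite /restrR /restr; case: asboolP.
Qed.

Lemma Cmeasurable_ReIm (h : V -> R[i]) : Rmeasurable (fun z => complex.Re (h z)) ->
  Rmeasurable (fun z => complex.Im (h z)) -> Cmeasurable (restr Om h).
Proof.
rewrite /Rmeasurable (_ : (fun p => restrR _ _) =
  (fun p : n.-tuple R * n.-tuple R => complex.Re (restr Om h (toC p.1 p.2)))); last first.
  by apply: funext => p /=; rewrite /restrR /restr; case: asboolP.
rewrite (_ : (fun p => restrR _ _) =
  (fun p : n.-tuple R * n.-tuple R => complex.Im (restr Om h (toC p.1 p.2)))) //.
by apply: funext => p /=; rewrite /restrR /restr; case: asboolP.
Qed.

Lemma cabsE (x : R[i]) : cabs x = Num.sqrt (complex.Re x ^+ 2 + complex.Im x ^+ 2).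
Proof. by rewrite /cabs normc_def. Qed.

Lemma Rmeasurable_cabs (h : V -> R[i]) : Cmeasurable (restr Om h) ->
  Rmeasurable (fun z => cabs (h z)).
Proof.
move=> mh; apply: (@eq_Rmeasurable
  (fun z => Num.sqrt (complex.Re (h z) ^+ 2 + complex.Im (h z) ^+ 2))).
  by move=> z _; rewrite cabsE.
apply: Rmeasurable_comp; first exact: sqrtr0.
  exact: continuous_measurable_fun (@sqrt_continuous R).
have mRe := Rmeasurable_Re mh; have mIm := Rmeasurable_Im mh.
by apply: RmeasurableD; apply: RmeasurableM.
Qed.

End restricted_measurability.

Section integral_on_domain.
Variables (R : realType) (n : nat).
Local Notation V := 'rV[R[i]]_n.
Variable Om : set V.
Implicit Types u v : V -> R.
Local Notation Rmeasurable := (Rmeasurable Om).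
Local Notation restrR := (restrR Om).

Definition vintR (u : V -> R) := vint_on Om (fun z => (u z)%:E).

Lemma vintRE u : vintR u = vint (fun z => (restrR u z)%:E).
Proof.
by rewrite /vintR /vint_on; congr vint; apply: funext => z; rewrite /restrR; case: asboolP.
Qed.

Lemma eq_vintR u v : (forall z, Om z -> u z = v z) -> vintR u = vintR v.
Proof.
move=> uv; rewrite /vintR /vint_on; congr vint; apply: funext => z.
by case: asboolP => // /uv ->.
Qed.

Lemma vintR_ge0 u : (forall z, Om z -> 0 <= u z) -> (0 <= vintR u)%E.
Proof. by move=> u0; apply: vint_ge0 => z; case: asboolP => // /u0; rewrite lee_fin. Qed.

Lemma le_vintR u v : (forall z, Om z -> 0 <= u z) -> (forall z, Om z -> u z <= v z) ->
  (vintR u <= vintR v)%E.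
Proof.
move=> u0 uv; apply: le_vint => z; case: asboolP => // Oz; rewrite lee_fin.
  exact: u0.
exact: uv.
Qed.

Lemma vintRZl (c : R) u : 0 <= c -> (forall z, Om z -> 0 <= u z) ->
  vintR (fun z => c * u z) = (c%:E * vintR u)%E.
Proof.
move=> c0 u0; rewrite /vintR /vint_on -vintZl //.
  by congr vint; apply: funext => z; case: asboolP => _; rewrite ?mule0 ?EFinM.
by move=> z; case: asboolP => // /u0; rewrite lee_fin.
Qed.

Lemma vintR0 : vintR (fun _ => 0) = 0%E.
Proof.
have := @vintRZl 0 (fun _ => 0) (lexx _) (fun _ _ => lexx _).
by rewrite mul0e => <-; apply: eq_vintR => z; rewrite mul0r.
Qed.

Lemma vintRD u v : Rmeasurable u -> Rmeasurable v ->
  (forall z, Om z -> 0 <= u z) -> (forall z, Om z -> 0 <= v z) ->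
  vintR (fun z => u z + v z) = (vintR u + vintR v)%E.
Proof.
move=> mu mv u0 v0; rewrite !vintRE -vintD.
- by congr vint; apply: funext => z; rewrite /restrR; case: asboolP; rewrite ?addr0.
- exact/measurable_EFinP.
- exact/measurable_EFinP.
- by move=> z; rewrite /restrR; case: asboolP => // /u0; rewrite lee_fin.
- by move=> z; rewrite /restrR; case: asboolP => // /v0; rewrite lee_fin.
Qed.

Lemma le_vintR_ae (N : set V) u v :
  measurable [set p : n.-tuple R * n.-tuple R | N (toC p.1 p.2)] ->
  vint (fun z => ((`[< N z >] : bool)%:R : R)%:E) = 0%E ->
  (forall z, Om z -> 0 <= u z) -> (forall z, Om z -> 0 <= v z) ->
  (forall z, Om z -> ~ N z -> u z <= v z) -> (vintR u <= vintR v)%E.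
Proof.
move=> mN N0 u0 v0 uv; apply: (le_vint_ae _ _ N0).
- apply/measurable_EFinP.
  rewrite (_ : (fun p => _) = \1_[set p : n.-tuple R * n.-tuple R | N (toC p.1 p.2)]).
    exact: measurable_indic.
  by apply: funext => p; rewrite indicE.
- by move=> z; rewrite lee_fin; case: asboolP.
- by move=> z; case: asboolP => // /u0; rewrite lee_fin.
- by move=> z; case: asboolP => // /v0; rewrite lee_fin.
move=> z; case: asboolP => [_ /eqP|nNz _]; first by rewrite eqe oner_eq0.
by case: asboolP => // Oz; rewrite lee_fin uv.
Qed.

Lemma vintR_EFin u : (forall z, Om z -> 0 <= u z) -> (vintR u < +oo)%E ->
  exists2 a, vintR u = a%:E & 0 <= a.
Proof.
move=> u0 uf; exists (fine (vintR u)); last by rewrite fine_ge0 ?vintR_ge0.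
by rewrite fineK // ge0_fin_numE // vintR_ge0.
Qed.

Lemma le_vintR_fin u v : (forall z, Om z -> 0 <= u z) ->
  (forall z, Om z -> u z <= v z) -> (vintR v < +oo)%E -> (vintR u < +oo)%E.
Proof. by move=> u0 uv; apply: le_lt_trans; apply: le_vintR. Qed.

Definition rintegrable u := Rmeasurable u /\ (vintR (fun z => `|u z|%R) < +oo)%E.

Lemma rintegrableZl (c : R) u : rintegrable u -> rintegrable (fun z => c * u z).
Proof.
move=> [mu fu]; split; first exact: RmeasurableZl.
have [x ux _] := @vintR_EFin (fun z => `|u z|) (fun z _ => normr_ge0 (u z)) fu.
rewrite (@eq_vintR _ (fun z => `|c| * `|u z|)); last by move=> z _; rewrite normrM.
by rewrite vintRZl // ux -EFinM ltry.
Qed.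

End integral_on_domain.

Section real_integral.
Variables (R : realType) (n : nat).
Local Notation V := 'rV[R[i]]_n.
Variable Om : set V.
Implicit Types u v : V -> R.
Local Notation Rmeasurable := (Rmeasurable Om).
Local Notation vintR := (vintR Om).
Local Notation rint := (rint Om).
Local Notation rintegrable := (rintegrable Om).

Definition posp u z : R := Num.max (u z) 0.
Definition negp u z : R := Num.max (- u z) 0.

Lemma posp_ge0 u z : 0 <= posp u z.
Proof. by rewrite le_max lexx orbT. Qed.

Lemma negp_ge0 u z : 0 <= negp u z.
Proof. by rewrite le_max lexx orbT. Qed.

Lemma posp_le u g z : u z <= g -> 0 <= g -> posp u z <= g.
Proof. by move=> ug g0; rewrite ge_max ug. Qed.

Lemma pospN u : posp (fun z => - u z) = negp u.
Proof. by []. Qed.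

Lemma posp_negp_sub u z : posp u z - negp u z = u z.
Proof. by rewrite /posp /negp; have [u0|u0] := leP 0 (u z); have [v0|v0] := leP 0 (- u z); lra. Qed.

Lemma Rmeasurable_posp u : Rmeasurable u -> Rmeasurable (posp u).
Proof.
apply: (Rmeasurable_comp (G := fun x => Num.max x 0)); first by rewrite maxxx.
exact: measurable_maxr.
Qed.

Lemma rintE u : rint u = fine (vintR (posp u)) - fine (vintR (negp u)).
Proof. by []. Qed.

Lemma rint_ge0E u : (forall z, Om z -> 0 <= u z) -> rint u = fine (vintR u).
Proof.
move=> u0; rewrite rintE (@eq_vintR _ _ _ (negp u) (fun _ => 0)).
  rewrite vintR0 /= subr0; congr fine; apply: eq_vintR => z Oz.
  by rewrite /posp max_l // u0.
by move=> z Oz; rewrite /negp max_r // oppr_le0 u0.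
Qed.

Lemma rintN u : rint (fun z => - u z) = - rint u.
Proof.
by rewrite !rintE opprB; congr (_ - _); congr (fine (vintR _)); apply: funext => z;
  rewrite /posp /negp opprK.
Qed.

Lemma ge0_fineMl (c : R) (x : \bar R) : 0 <= c -> fine (c%:E * x)%E = c * fine x.
Proof.
move=> c0; have [->|cneq0] := eqVneq c 0; first by rewrite mul0e mul0r.
have cpos : (0 < c%:E)%E by rewrite lte_fin lt_def cneq0.
by case: x => [x| |] //=; rewrite ?gt0_muley ?gt0_muleNy //= mulr0.
Qed.

Lemma rintZl (c : R) u : rint (fun z => c * u z) = c * rint u.
Proof.
have rintZl_ge0 (k : R) : 0 <= k -> rint (fun z => k * u z) = k * rint u.
  move=> k0; rewrite !rintE mulrBr -!ge0_fineMl // -!vintRZl //; last 2 first.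
  - by move=> z _; exact: negp_ge0.
  - by move=> z _; exact: posp_ge0.
  by congr (fine (vintR _) - fine (vintR _)); apply: funext => z;
    rewrite /posp /negp maxr_pMr // mulr0 ?mulrN.
have [c0|c0] := leP 0 c; first exact: rintZl_ge0.
rewrite (_ : (fun z => c * u z) = (fun z => - ((- c) * u z))); last first.
  by apply: funext => z; rewrite mulNr opprK.
by rewrite rintN rintZl_ge0 ?mulNr ?opprK // oppr_ge0 ltW.
Qed.

Lemma rint_le u g : (forall z, Om z -> u z <= g z) -> (forall z, Om z -> 0 <= g z) ->
  (vintR g < +oo)%E -> rint u <= fine (vintR g).
Proof.
move=> ug g0 gfin.
have p0 z : Om z -> 0 <= posp u z by move=> _; exact: posp_ge0.
have pg z : Om z -> posp u z <= g z by move=> Oz; rewrite posp_le ?ug ?g0.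
have [a Ea _] := vintR_EFin p0 (le_vintR_fin p0 pg gfin).
have [b Eb _] := vintR_EFin g0 gfin.
apply: le_trans (_ : fine (vintR (posp u)) <= _).
  by rewrite rintE lerBlDr lerDl fine_ge0 // vintR_ge0 // => z _; exact: negp_ge0.
by rewrite Ea Eb /= -lee_fin -Ea -Eb; apply: le_vintR.
Qed.

Lemma rint_sub u f g : Rmeasurable f -> Rmeasurable g ->
  (forall z, Om z -> 0 <= f z) -> (forall z, Om z -> 0 <= g z) ->
  (vintR f < +oo)%E -> (vintR g < +oo)%E -> (forall z, Om z -> u z = f z - g z) ->
  rint u = fine (vintR f) - fine (vintR g).
Proof.
move=> mf mg f0 g0 ffin gfin ufg.
have mu : Rmeasurable u.
  apply: (eq_Rmeasurable (fun z Oz => esym (ufg z Oz))).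
  exact: RmeasurableD mf (RmeasurableN mg).
have mp := Rmeasurable_posp mu; have mn := Rmeasurable_posp (RmeasurableN mu).
have p0 z : Om z -> 0 <= posp u z by move=> _; exact: posp_ge0.
have n0 z : Om z -> 0 <= negp u z by move=> _; exact: negp_ge0.
have pf z : Om z -> posp u z <= f z.
  by move=> Oz; rewrite posp_le ?f0 // ufg // lerBlDr lerDl g0.
have ng z : Om z -> negp u z <= g z.
  by move=> Oz; rewrite -pospN posp_le ?g0 // ufg // opprB lerBlDr lerDl f0.
have [a Ea _] := vintR_EFin p0 (le_vintR_fin p0 pf ffin).
have [b Eb _] := vintR_EFin n0 (le_vintR_fin n0 ng gfin).
have [c Ec _] := vintR_EFin f0 ffin; have [d Ed _] := vintR_EFin g0 gfin.
have key : vintR (fun z => posp u z + g z) = vintR (fun z => negp u z + f z).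
  apply: eq_vintR => z Oz; have := ufg z Oz; have := posp_negp_sub u z; lra.
move: key; rewrite !vintRD // Ea Eb Ec Ed -!EFinD => -[key].
by rewrite rintE Ea Eb /=; lra.
Qed.

Lemma rintD u v : rintegrable u -> rintegrable v ->
  rint (fun z => u z + v z) = rint u + rint v.
Proof.
move=> [mu fu] [mv fv].
have mn w : Rmeasurable w -> Rmeasurable (negp w).
  by move=> mw; rewrite -pospN; exact: Rmeasurable_posp (RmeasurableN mw).
have fp w : (vintR (fun z => `|w z|%R) < +oo)%E -> (vintR (posp w) < +oo)%E.
  by apply: le_vintR_fin => z _; rewrite ?posp_ge0 ?posp_le ?ler_norm.
have fn w : (vintR (fun z => `|w z|%R) < +oo)%E -> (vintR (negp w) < +oo)%E.
  by apply: le_vintR_fin => z _; rewrite ?negp_ge0 // -pospN posp_le // -normrN ler_norm.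
have [a Ea _] := vintR_EFin (fun z _ => posp_ge0 u z) (fp u fu).
have [b Eb _] := vintR_EFin (fun z _ => negp_ge0 u z) (fn u fu).
have [c Ec _] := vintR_EFin (fun z _ => posp_ge0 v z) (fp v fv).
have [d Ed _] := vintR_EFin (fun z _ => negp_ge0 v z) (fn v fv).
have mpu := Rmeasurable_posp mu; have mpv := Rmeasurable_posp mv.
have mnu := mn u mu; have mnv := mn v mv.
have -> : rint (fun z => u z + v z) = fine (vintR (fun z => posp u z + posp v z)) -
                                      fine (vintR (fun z => negp u z + negp v z)).
  apply: rint_sub; try exact: RmeasurableD;
    try by move=> z _; rewrite addr_ge0 ?posp_ge0 ?negp_ge0.
  - by rewrite vintRD // ?Ea ?Ec -?EFinD ?ltry // => z _; exact: posp_ge0.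
  - by rewrite vintRD // ?Eb ?Ed -?EFinD ?ltry // => z _; exact: negp_ge0.
  by move=> z _; have := posp_negp_sub u z; have := posp_negp_sub v z; lra.
rewrite !vintRD ?Ea ?Eb ?Ec ?Ed -?EFinD; try by [|move=> z _; exact: posp_ge0|move=> z _; exact: negp_ge0].
rewrite !rintE Ea Eb Ec Ed /=; lra.
Qed.

End real_integral.

Local Open Scope complex_scope.

Section complex_modulus.
Variable R : realType.
Implicit Types x y : R[i].

Lemma normc_cabs x : `|x| = (cabs x)%:C.
Proof. by rewrite /cabs normc_def. Qed.

Lemma cabs0 : cabs (0 : R[i]) = 0.
Proof. by rewrite /cabs normr0. Qed.

Lemma cabs_ge0 x : 0 <= cabs x.
Proof. by rewrite cabsE sqrtr_ge0. Qed.

Lemma cabs_real (r : R) : cabs r%:C = `|r|.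
Proof. by rewrite cabsE /= expr0n /= addr0 sqrtr_sqr. Qed.

Lemma cabsM x y : cabs (x * y) = cabs x * cabs y.
Proof. by rewrite /cabs normrM !normc_cabs /= mulr0 subr0. Qed.

Lemma cabs_conj x : cabs (conjc x) = cabs x.
Proof. by case: x => a b; rewrite !cabsE /= sqrrN. Qed.

Lemma ler_norm_Re_cabs x : `|complex.Re x| <= cabs x.
Proof.
rewrite cabsE -sqrtr_sqr ler_sqrt; last by rewrite addr_ge0 // sqr_ge0.
by rewrite lerDl sqr_ge0.
Qed.

Lemma ler_norm_Im_cabs x : `|complex.Im x| <= cabs x.
Proof.
rewrite cabsE -sqrtr_sqr ler_sqrt; last by rewrite addr_ge0 // sqr_ge0.
by rewrite lerDr sqr_ge0.
Qed.

Lemma cabs_norm x : cabs `|x| = cabs x.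
Proof. by rewrite normc_cabs cabs_real ger0_norm // cabs_ge0. Qed.

Lemma mulc_conj_cabs x : x * conjc x = (cabs x ^+ 2)%:C.
Proof.
rewrite cabsE sqr_sqrtr; last by rewrite addr_ge0 // sqr_ge0.
by case: x => a b /=; apply/eqP; rewrite eq_complex /=; apply/andP; split; apply/eqP; ring.
Qed.

Lemma Re_mul_real x (r : R) : complex.Re (x * r%:C) = complex.Re x * r.
Proof. by case: x => a b /=; rewrite mulr0 subr0. Qed.

Lemma Im_mul_real x (r : R) : complex.Im (x * r%:C) = complex.Im x * r.
Proof. by case: x => a b /=; rewrite mulr0 add0r. Qed.

(* Cauchy-Schwarz against the unit vector [(a, b)]. *)
Lemma ler_Re_Im_cabs (a b : R) x : a ^+ 2 + b ^+ 2 = 1 ->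
  a * complex.Re x + b * complex.Im x <= cabs x.
Proof.
move=> ab1; set X := complex.Re x; set Y := complex.Im x.
have CS : (a * X + b * Y) ^+ 2 <= X ^+ 2 + Y ^+ 2.
  have -> : X ^+ 2 + Y ^+ 2 = (a * X + b * Y) ^+ 2 + (a * Y - b * X) ^+ 2.
    by rewrite -[X ^+ 2 + Y ^+ 2]mul1r -ab1; ring.
  by rewrite lerDl sqr_ge0.
apply: le_trans (_ : Num.sqrt ((a * X + b * Y) ^+ 2) <= _).
  by rewrite sqrtr_sqr ler_norm.
by rewrite cabsE ler_sqrt // addr_ge0 // sqr_ge0.
Qed.

End complex_modulus.

Section complex_integral.
Variables (R : realType) (n : nat).
Local Notation V := 'rV[R[i]]_n.
Variable Om : set V.
Local Notation vintR := (vintR Om).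
Local Notation rint := (rint Om).

Lemma cint_real (u : V -> R) : cint Om (fun w => (u w)%:C) = (rint u)%:C.
Proof.
rewrite /cint (_ : rint (fun z => complex.Im (u z)%:C) = 0) //.
by rewrite (rint_ge0E (u := fun=> 0)) ?vintR0.
Qed.

Lemma cint_conj (h : V -> R[i]) : cint Om (fun w => conjc (h w)) = conjc (cint Om h).
Proof.
rewrite /cint (_ : (fun z => complex.Re (conjc (h z))) = fun z => complex.Re (h z)).
  rewrite (_ : (fun z => complex.Im (conjc (h z))) = fun z => - complex.Im (h z)).
    by rewrite rintN.
  by apply: funext => z; case: (h z).
by apply: funext => z; case: (h z).
Qed.

Lemma cabs_cint_le (h : V -> R[i]) : Cmeasurable (restr Om h) ->
  (vintR (fun z => cabs (h z)) < +oo)%E ->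
  cabs (cint Om h) <= fine (vintR (fun z => cabs (h z))).
Proof.
move=> mh hfin.
pose X z := complex.Re (h z); pose Y z := complex.Im (h z).
have intX : rintegrable Om X.
  split; first exact: Rmeasurable_Re.
  by apply: le_vintR_fin hfin => z _; rewrite ?normr_ge0 ?ler_norm_Re_cabs.
have intY : rintegrable Om Y.
  split; first exact: Rmeasurable_Im.
  by apply: le_vintR_fin hfin => z _; rewrite ?normr_ge0 ?ler_norm_Im_cabs.
rewrite /cint cabsE /=.
set A := rint X; set B := rint Y; set r := Num.sqrt (A ^+ 2 + B ^+ 2).
have [->|rneq0] := eqVneq r 0; first by rewrite fine_ge0 // vintR_ge0 // => z _; exact: cabs_ge0.
have r2 : r ^+ 2 = A ^+ 2 + B ^+ 2 by rewrite sqr_sqrtr // addr_ge0 // sqr_ge0.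
have ab1 : (A / r) ^+ 2 + (B / r) ^+ 2 = 1.
  by rewrite !expr_div_n -mulrDl -r2 divff // expf_eq0.
(* rotating [(A, B)] onto the real axis turns [r] into the integral of a real function *)
have -> : r = rint (fun z => A / r * X z + B / r * Y z).
  rewrite rintD; try exact: rintegrableZl.
  rewrite !rintZl -/A -/B.
  have -> : A / r * A + B / r * B = r ^+ 2 / r by rewrite r2; field.
  by rewrite expr2 mulfK.
by apply: rint_le => // z _; [exact: ler_Re_Im_cabs | exact: cabs_ge0].
Qed.

End complex_integral.

Section bergman_kernel.
Variables (R : realType) (n : nat).
Local Notation V := 'rV[R[i]]_n.
Variables (Om : set V) (K : V -> V -> R[i]).
Hypotheses (BK : bergman_kernel Om K) (BRK : property_BR Om K).
Local Notation vintR := (vintR Om).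

Lemma vintR_sqr_bergman_fin z : Om z -> (vintR (fun w => (cabs (K w z) ^+ 2)%R) < +oo)%E.
Proof.
move=> Oz; have [_ [_ Kfin]] := BK.1 z Oz; move: Kfin.
rewrite /Lpnorm -/(vintR (fun w => cabs (K w z) `^ 2)).
rewrite (@eq_vintR _ _ _ _ (fun w => cabs (K w z) ^+ 2)); last first.
  by move=> w _; rewrite -[2]/(2%:R) powR_mulrn // cabs_ge0.
have [->|] := eqVneq (vintR (fun w => cabs (K w z) ^+ 2)) +oo%E.
  by rewrite poweRyr // invr_eq0.
by move=> Kfin _; rewrite ltey.
Qed.

(* the squared [A^2]-norm of [K(., z)], which is [K(z, z)] *)
Definition kdiag z := fine (vintR (fun w => cabs (K w z) ^+ 2)).

Lemma kdiagE z : Om z -> vintR (fun w => cabs (K w z) ^+ 2) = (kdiag z)%:E.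
Proof.
move=> Oz; rewrite /kdiag fineK // ge0_fin_numE ?vintR_sqr_bergman_fin //.
by apply: vintR_ge0 => w _; rewrite sqr_ge0.
Qed.

Lemma bergman_diag z : Om z -> K z z = (kdiag z)%:C.
Proof.
move=> Oz; rewrite (BK.2 _ (BK.1 z Oz) z Oz).
under eq_fun do rewrite mulc_conj_cabs.
by rewrite cint_real rint_ge0E // => w _; exact: sqr_ge0.
Qed.

Lemma kdiag_gt0 z : Om z -> 0 < kdiag z.
Proof.
move=> Oz; rewrite lt_def fine_ge0 ?andbT; last by apply: vintR_ge0 => w _; exact: sqr_ge0.
by apply: contra_neq (BRK.1 z Oz) => k0; rewrite bergman_diag // k0.
Qed.

Lemma bergman_conj z w : Om z -> Om w -> K z w = conjc (K w z).
Proof.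
move=> Oz Ow; rewrite (BK.2 _ (BK.1 w Ow) z Oz) (BK.2 _ (BK.1 z Oz) w Ow) -cint_conj.
by congr cint; apply: funext => u; rewrite rmorphM /= conjcK mulrC.
Qed.

Definition BR_const := fine (BR_sup Om K).

Lemma BR_supE : Om !=set0 -> BR_sup Om K = BR_const%:E.
Proof.
case=> z Oz; rewrite /BR_const fineK // fin_numE; apply/andP; split.
  apply/eqP => supNy.
  have : ((complex.Re (`|K z z| / K z z))%:E <= BR_sup Om K)%E.
    by apply: ereal_sup_ubound; exists z, z.
  by rewrite supNy leeNy_eq.
by rewrite lt_eqF // BRK.2.
Qed.

Lemma cabs_bergman_le z w : Om z -> Om w -> cabs (K w z) / kdiag z <= BR_const.
Proof.
move=> Oz Ow; rewrite -lee_fin -(BR_supE (ex_intro _ z Oz)).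
apply: ereal_sup_ubound; exists z, w; split=> //; split=> //.
by rewrite bergman_diag // normc_cabs -fmorph_div.
Qed.

Lemma BR_const_ge1 : Om !=set0 -> 1 <= BR_const.
Proof.
case=> z Oz; apply: le_trans (cabs_bergman_le Oz Oz).
by rewrite bergman_diag // cabs_real ger0_norm ?divff ?gt_eqF ?kdiag_gt0 // ltW // kdiag_gt0.
Qed.

Definition berezin_density z w := cabs (K w z) ^+ 2 / kdiag z.

Lemma berezin_density_ge0 z w : Om z -> 0 <= berezin_density z w.
Proof. by move=> Oz; rewrite divr_ge0 ?sqr_ge0 // ltW // kdiag_gt0. Qed.

Lemma vintR_berezin_density z : Om z -> vintR (berezin_density z) = 1%E.
Proof.
move=> Oz; rewrite (@eq_vintR _ _ _ _ (fun w => (kdiag z)^-1 * cabs (K w z) ^+ 2)); last first.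
  by move=> w _; rewrite /berezin_density mulrC.
rewrite vintRZl; last 2 first.
- by rewrite invr_ge0 ltW // kdiag_gt0.
- by move=> w _; exact: sqr_ge0.
by rewrite kdiagE // -EFinM mulVf // gt_eqF // kdiag_gt0.
Qed.

Lemma berezin_density_le z w : Om z -> Om w ->
  berezin_density z w <= BR_const * cabs (K z w).
Proof.
move=> Oz Ow; rewrite /berezin_density (bergman_conj Oz Ow) cabs_conj expr2 -mulrA mulrC.
by apply: ler_wpM2r; [exact: cabs_ge0 | exact: cabs_bergman_le].
Qed.

Lemma Rmeasurable_berezin_density z : Om z -> Rmeasurable Om (berezin_density z).
Proof.
move=> Oz; have [_ [mK _]] := BK.1 z Oz.
apply: (@eq_Rmeasurable _ _ _ (fun w => (kdiag z)^-1 * (cabs (K w z) * cabs (K w z)))).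
  by move=> w _; rewrite /berezin_density mulrC expr2.
by apply: RmeasurableZl; apply: RmeasurableM; exact: Rmeasurable_cabs.
Qed.

Lemma berezinE phi z : Om z ->
  berezin Om K phi z = cint Om (fun w => phi w * (berezin_density z w)%:C).
Proof.
move=> Oz; rewrite /berezin; congr cint; apply: funext => w.
by rewrite bergman_diag // normc_cabs /berezin_density -rmorphXn -fmorph_div.
Qed.

End bergman_kernel.

(* Young's inequality [x^(q-1) t <= t^q / q + x^q / q'] with [1/q + 1/q' = 1]:
   the graph of the convex function [t |-> t^q] lies above its tangent at [x]. *)
Lemma powR_tangent_le (R : realType) (q x t : R) : 1 <= q -> 0 <= x -> 0 <= t ->
  q * x `^ (q - 1) * t <= t `^ q + (q - 1) * x `^ q.
Proof.
move=> q1 x0 t0; have [->|qneq1] := eqVneq q 1.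
  by rewrite subrr powRr0 powRr1 // mul0r addr0 !mul1r.
have qgt1 : 1 < q by rewrite lt_def qneq1 q1.
have qpos : 0 < q by apply: lt_trans qgt1.
have qm1 : 0 < q - 1 by rewrite subr_gt0.
pose q' := q / (q - 1).
have q'pos : 0 < q' by rewrite divr_gt0.
have conj : q^-1 + q'^-1 = 1 by rewrite /q' invf_div; field; rewrite gt_eqF.
have := conjugate_powR t0 (powR_ge0 x (q - 1)) qpos q'pos conj.
rewrite -powRrM (_ : (q - 1) * q' = q); last by rewrite /q'; field; rewrite gt_eqF.
rewrite -(@ler_pM2l _ q) // => young.
apply: le_trans (_ : q * (t `^ q / q + x `^ q / q') <= _).
  by rewrite (mulrC t) mulrA in young.
by rewrite /q' mulrDr le_eqVlt; apply/orP; left; apply/eqP; field; rewrite ?gt_eqF.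
Qed.

Section jensen.
Variables (R : realType) (n : nat).
Local Notation V := 'rV[R[i]]_n.
Variables (Om : set V) (k : V -> R).
Hypotheses (mk : Rmeasurable Om k) (k0 : forall w, Om w -> 0 <= k w)
  (k1 : vintR Om k = 1%E).
Local Notation vintR := (vintR Om).

Lemma jensen_powR (g : V -> R) (q : R) : 1 <= q -> Rmeasurable Om g ->
  (forall w, Om w -> 0 <= g w) ->
  (vintR (fun w => (g w * k w)%R) < +oo)%E -> (vintR (fun w => (g w `^ q * k w)%R) < +oo)%E ->
  fine (vintR (fun w => g w * k w)) `^ q <= fine (vintR (fun w => g w `^ q * k w)).
Proof.
move=> q1 mg g0 gfin gqfin.
have qpos : 0 < q by apply: lt_le_trans q1.
have [J EJ J0] := vintR_EFin (fun w Ow => mulr_ge0 (g0 w Ow) (k0 Ow)) gfin.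
have [Q EQ Q0] := vintR_EFin (fun w Ow => mulr_ge0 (powR_ge0 (g w) q) (k0 Ow)) gqfin.
rewrite EJ EQ /=.
have [->|Jneq0] := eqVneq J 0; first by rewrite powR0 // gt_eqF.
(* integrate the tangent-line inequality at [J] against the density [k] *)
have tangent : (vintR (fun w => ((q * J `^ (q - 1)) * (g w * k w))%R) <=
    vintR (fun w => (g w `^ q * k w + ((q - 1) * J `^ q) * k w)%R))%E.
  apply: le_vintR => w Ow.
    by rewrite !mulr_ge0 ?powR_ge0 ?g0 ?k0 // ltW.
  rewrite mulrA -mulrDl; apply: ler_wpM2r; first exact: k0.
  by apply: powR_tangent_le => //; exact: g0.
have gq0 w : Om w -> 0 <= g w `^ q * k w by move=> Ow; rewrite mulr_ge0 ?powR_ge0 ?k0.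
have cq0 : 0 <= (q - 1) * J `^ q by rewrite mulr_ge0 ?powR_ge0 // subr_ge0.
rewrite vintRZl in tangent; last 2 first.
- by rewrite mulr_ge0 ?powR_ge0 // ltW.
- by move=> w Ow; rewrite mulr_ge0 ?g0 ?k0.
rewrite vintRD in tangent; last 4 first.
- by apply: RmeasurableM => //; exact: Rmeasurable_powR (lt0r_neq0 qpos) mg.
- exact: RmeasurableZl.
- exact: gq0.
- by move=> w Ow; rewrite mulr_ge0 ?k0.
rewrite vintRZl // EJ EQ k1 mule1 -!EFinM -EFinD lee_fin in tangent.
have JqE : J `^ (q - 1) * J = J `^ q.
  by rewrite -{2}(powRr1 J0) -powRD ?subrK // Jneq0 implybT.
rewrite -mulrA JqE in tangent; nra.
Qed.

End jensen.

Section berezin_pointwise.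
Variables (R : realType) (n : nat).
Local Notation V := 'rV[R[i]]_n.
Variables (Om : set V) (K : V -> V -> R[i]).
Hypotheses (BK : bergman_kernel Om K) (BRK : property_BR Om K).
Local Notation vintR := (vintR Om).
Local Notation density := (berezin_density Om K).

Lemma cabs_berezin_le (phi : V -> R[i]) z : Om z -> Cmeasurable (restr Om phi) ->
  (vintR (fun w => (cabs (phi w) * density z w)%R) < +oo)%E ->
  cabs (berezin Om K phi z) <= fine (vintR (fun w => cabs (phi w) * density z w)).
Proof.
move=> Oz mphi phifin.
have d0 w : Om w -> 0 <= density z w by move=> _; exact: berezin_density_ge0.
have md := Rmeasurable_berezin_density BK Oz.
have cabsE w : Om w -> cabs (phi w * (density z w)%:C) = cabs (phi w) * density z w.
  by move=> Ow; rewrite cabsM cabs_real ger0_norm ?d0.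
rewrite berezinE // -(eq_vintR cabsE); apply: cabs_cint_le; last by rewrite (eq_vintR cabsE).
apply: Cmeasurable_ReIm.
  apply: (eq_Rmeasurable (u := fun w => complex.Re (phi w) * density z w)).
    by move=> w _; rewrite Re_mul_real.
  by apply: RmeasurableM => //; exact: Rmeasurable_Re.
apply: (eq_Rmeasurable (u := fun w => complex.Im (phi w) * density z w)).
  by move=> w _; rewrite Im_mul_real.
by apply: RmeasurableM => //; exact: Rmeasurable_Im.
Qed.

End berezin_pointwise.

Section Lpnorm_finite_exponent.
Variables (R : realType) (n : nat).
Local Notation V := 'rV[R[i]]_n.
Variable Om : set V.
Local Notation vintR := (vintR Om).
Implicit Types f g : V -> R[i].

Lemma LpnormE f (p : R) :
  Lpnorm Om p%:E f = (vintR (fun z => (cabs (f z) `^ p)%R) `^ p^-1)%E.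
Proof. by []. Qed.

Lemma vintR_powR_fin f (p : R) : 0 < p -> (Lpnorm Om p%:E f < +oo)%E ->
  (vintR (fun z => (cabs (f z) `^ p)%R) < +oo)%E.
Proof.
move=> p0; rewrite LpnormE.
have [->|] := eqVneq (vintR (fun z => cabs (f z) `^ p)) +oo%E.
  by rewrite poweRyr // invr_eq0 gt_eqF.
by move=> pfin _; rewrite ltey.
Qed.

Lemma vintR_powR_le_of_Lpnorm f g (p M : R) : 0 < p -> 0 <= M ->
  (vintR (fun z => (cabs (f z) `^ p)%R) < +oo)%E ->
  (Lpnorm Om p%:E g <= M%:E * Lpnorm Om p%:E f)%E ->
  (vintR (fun z => (cabs (g z) `^ p)%R) <= (M `^ p)%:E * vintR (fun z => (cabs (f z) `^ p)%R))%E.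
Proof.
move=> p0 M0 ffin; have [X EX X0] := vintR_EFin (fun z _ => powR_ge0 (cabs (f z)) p) ffin.
rewrite !LpnormE EX poweR_EFin => gle.
have gfin : (vintR (fun z => (cabs (g z) `^ p)%R) < +oo)%E.
  rewrite ltey; apply/eqP => ginf; move: gle; rewrite ginf poweRyr ?invr_eq0 ?gt_eqF //.
have [Y EY Y0] := vintR_EFin (fun z _ => powR_ge0 (cabs (g z)) p) gfin.
move: gle; rewrite EY poweR_EFin -EFinM !lee_fin => /(ge0_ler_powR (ltW p0)).
rewrite !nnegrE powR_ge0 mulr_ge0 ?powR_ge0 // => /(_ isT isT).
by rewrite -powRrM mulVf ?gt_eqF // powRr1 // powRM ?powR_ge0 // -powRrM mulVf ?gt_eqF // powRr1.
Qed.

Lemma Lpnorm_le_of_vintR_powR f g (p c : R) : 0 < p -> 0 <= c ->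
  (vintR (fun z => (cabs (f z) `^ p)%R) < +oo)%E ->
  (vintR (fun z => (cabs (g z) `^ p)%R) <= c%:E * vintR (fun z => (cabs (f z) `^ p)%R))%E ->
  (Lpnorm Om p%:E g <= (c `^ p^-1)%:E * Lpnorm Om p%:E f)%E.
Proof.
move=> p0 c0 ffin; have [X EX X0] := vintR_EFin (fun z _ => powR_ge0 (cabs (f z)) p) ffin.
rewrite EX -EFinM => gle.
have [Z EZ Z0] := vintR_EFin (fun z _ => powR_ge0 (cabs (g z)) p) (le_lt_trans gle (ltry _)).
move: gle; rewrite !LpnormE EZ EX !poweR_EFin -EFinM !lee_fin => gle.
rewrite -powRM //; apply: ge0_ler_powR => //; rewrite ?invr_ge0 ?ltW // nnegrE //.
exact: mulr_ge0.
Qed.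

End Lpnorm_finite_exponent.

Section berezin_finite_exponent.
Variables (R : realType) (n : nat).
Local Notation V := 'rV[R[i]]_n.
Variables (Om : set V) (K : V -> V -> R[i]).
Hypotheses (BK : bergman_kernel Om K) (BRK : property_BR Om K).
Local Notation vintR := (vintR Om).
Local Notation density := (berezin_density Om K).
Local Notation S := (BR_const Om K).

Lemma Pplus_real (u : V -> R) z : (forall w, Om w -> 0 <= u w) ->
  Pplus Om K (fun w => (u w)%:C) z = (fine (vintR (fun w => cabs (K z w) * u w)))%:C.
Proof.
move=> u0; rewrite /Pplus; under eq_fun do rewrite normc_cabs -rmorphM.
by rewrite cint_real rint_ge0E // => w Ow; rewrite mulr_ge0 ?cabs_ge0 ?u0.
Qed.

(* Jensen's inequality for the probability density of [B] at [z], followed by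
   the bound [|K(w, z)|^2 / K(z, z) <= BR_const * |K(z, w)|] *)
Lemma cabs_berezin_powR_le phi z (q : R) : Om z -> 1 <= q -> Cmeasurable (restr Om phi) ->
  (vintR (fun w => (cabs (K z w) * cabs (phi w) `^ q)%R) < +oo)%E ->
  cabs (berezin Om K phi z) `^ q <=
    S * fine (vintR (fun w => cabs (K z w) * cabs (phi w) `^ q)).
Proof.
move=> Oz q1 mphi Pfin.
have qpos : 0 < q by apply: lt_le_trans q1.
have d0 w : Om w -> 0 <= density z w by move=> _; exact: berezin_density_ge0.
have md := Rmeasurable_berezin_density BK Oz.
have mphiq := Rmeasurable_powR (lt0r_neq0 qpos) (Rmeasurable_cabs mphi).
have S0 : 0 <= S by apply: le_trans (BR_const_ge1 BK BRK (ex_intro _ z Oz)).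
have [P EP P0] := vintR_EFin (fun w _ => mulr_ge0 (cabs_ge0 (K z w)) (powR_ge0 (cabs (phi w)) q)) Pfin.
have Qle : (vintR (fun w => (cabs (phi w) `^ q * density z w)%R) <= (S * P)%:E)%E.
  rewrite EFinM -EP -vintRZl // => [|w _]; last by rewrite mulr_ge0 ?cabs_ge0 ?powR_ge0.
  apply: le_vintR => w Ow; first by rewrite mulr_ge0 ?powR_ge0 ?d0.
  rewrite [leRHS]mulrA [leLHS]mulrC; apply: ler_wpM2r; first exact: powR_ge0.
  exact: berezin_density_le.
have Qfin := le_lt_trans Qle (ltry _).
have Jfin : (vintR (fun w => (cabs (phi w) * density z w)%R) < +oo)%E.
  apply: (@le_vintR_fin _ _ _ _ (fun w => density z w + cabs (phi w) `^ q * density z w)).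
  - by move=> w Ow; rewrite mulr_ge0 ?cabs_ge0 ?d0.
  - move=> w Ow; rewrite -{2}(mul1r (density z w)) -mulrDl.
    apply: ler_wpM2r; first exact: d0.
    have [phi1|phi1] := leP (cabs (phi w)) 1; first by rewrite (le_trans phi1) // lerDl powR_ge0.
    by rewrite (le_trans (le1r_powR (ltW phi1) q1)) // lerDr.
  - rewrite vintRD ?vintR_berezin_density //.
    + by rewrite lte_add_pinfty ?ltry.
    + exact: RmeasurableM.
    + by move=> w Ow; rewrite mulr_ge0 ?powR_ge0 ?d0.
have [Q EQ _] := vintR_EFin (fun w Ow => mulr_ge0 (powR_ge0 (cabs (phi w)) q) (d0 w Ow)) Qfin.
have jensen := jensen_powR md d0 (vintR_berezin_density BK BRK Oz) q1 (Rmeasurable_cabs mphi)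
  (fun w _ => cabs_ge0 (phi w)) Jfin Qfin.
have QSP : fine (vintR (fun w => cabs (phi w) `^ q * density z w)) <=
    S * fine (vintR (fun w => cabs (K z w) * cabs (phi w) `^ q)).
  by move: Qle; rewrite EQ EP lee_fin.
apply: le_trans (le_trans jensen QSP).
have Ble := cabs_berezin_le BK BRK Oz mphi Jfin.
apply: ge0_ler_powR; [exact: ltW | by rewrite nnegrE cabs_ge0 | | by []].
by rewrite nnegrE fine_ge0 // vintR_ge0 // => w Ow; rewrite mulr_ge0 ?cabs_ge0 ?d0.
Qed.

Lemma cabs_berezin_le_Pplus phi z (q p : R) : Om z -> 1 <= q -> 0 <= p ->
  Cmeasurable (restr Om phi) ->
  cintegrable Om (fun w => `|K z w| * (cabs (phi w) `^ q)%:C) ->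
  cabs (berezin Om K phi z) `^ (q * p) <=
    S `^ p * cabs (Pplus Om K (fun w => (cabs (phi w) `^ q)%:C) z) `^ p.
Proof.
move=> Oz q1 p0 mphi [_ Pfin].
have S0 : 0 <= S by apply: le_trans (BR_const_ge1 BK BRK (ex_intro _ z Oz)).
have Pw0 w : Om w -> 0 <= cabs (K z w) * cabs (phi w) `^ q.
  by move=> _; rewrite mulr_ge0 ?cabs_ge0 ?powR_ge0.
have {}Pfin : (vintR (fun w => (cabs (K z w) * cabs (phi w) `^ q)%R) < +oo)%E.
  rewrite -(@eq_vintR _ _ _ (fun w => cabs (`|K z w| * (cabs (phi w) `^ q)%:C))) //.
  by move=> w _; rewrite cabsM cabs_norm cabs_real ger0_norm // powR_ge0.
have P0 : 0 <= fine (vintR (fun w => cabs (K z w) * cabs (phi w) `^ q)).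
  by rewrite fine_ge0 // vintR_ge0.
rewrite Pplus_real => [|w _]; last exact: powR_ge0.
rewrite cabs_real ger0_norm // powRrM -powRM //.
have := cabs_berezin_powR_le Oz q1 mphi Pfin.
by apply: ge0_ler_powR; rewrite // nnegrE ?powR_ge0 ?mulr_ge0.
Qed.

End berezin_finite_exponent.

Section berezin_bounds.
Variables (R : realType) (n : nat).
Local Notation V := 'rV[R[i]]_n.
Variables (Om : set V) (K : V -> V -> R[i]).
Hypotheses (BK : bergman_kernel Om K) (BRK : property_BR Om K) (Om0 : Om !=set0).
Local Notation vintR := (vintR Om).
Local Notation S := (BR_const Om K).

(* Pointwise off a null set, [|B phi|^r <= S^p0 (P^+ |phi|^(r/p0))^p0]. *)
Lemma berezin_bound_real (p0 r M : R) : 0 < p0 -> p0 <= r -> Pplus_bound Om K p0 M ->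
  berezin_bound Om K r%:E ((S * M) `^ (p0 / r)).
Proof.
move=> p0pos p0r [M0 PB]; split; first exact: powR_ge0.
move=> phi _ [mphi phifin].
have rpos : 0 < r by apply: lt_le_trans p0r.
pose q := r / p0.
have q1 : 1 <= q by rewrite /q ler_pdivlMr // mul1r.
have rq : q * p0 = r by rewrite /q divfK // gt_eqF.
have S0 : 0 <= S by apply: le_trans (BR_const_ge1 BK BRK Om0).
have rfin := vintR_powR_fin rpos phifin.
pose f w := (cabs (phi w) `^ q)%:C.
have Ef : vintR (fun w => cabs (f w) `^ p0) = vintR (fun w => cabs (phi w) `^ r).
  by apply: eq_vintR => w _; rewrite cabs_real ger0_norm ?powR_ge0 // -powRrM rq.
have ffin : (vintR (fun w => (cabs (f w) `^ p0)%R) < +oo)%E by rewrite Ef.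
have mf : Cmeasurable (restr Om f).
  apply: Cmeasurable_ReIm; last exact: Rmeasurable0.
  by apply: Rmeasurable_powR (Rmeasurable_cabs mphi); rewrite gt_eqF // (lt_le_trans ltr01).
have fLp : Lp Om p0%:E f.
  split => //; have [X EX _] := vintR_EFin (fun w _ => powR_ge0 (cabs (f w)) p0) ffin.
  by rewrite LpnormE EX poweR_EFin ltry.
have [[N [mN [N0 Pfint]]] Pfle] := PB f fLp.
have Pfpow := vintR_powR_le_of_Lpnorm p0pos M0 ffin Pfle.
rewrite Ef in Pfpow.
rewrite powRrM; apply: Lpnorm_le_of_vintR_powR rpos (powR_ge0 _ _) rfin _.
apply: le_trans (_ : (S `^ p0)%:E * vintR (fun z => (cabs (Pplus Om K f z) `^ p0)%R) <= _)%E.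
  rewrite -vintRZl ?powR_ge0 // => [|z _]; last exact: powR_ge0.
  apply: (le_vintR_ae mN N0) => [z _|z _|z Oz nNz]; rewrite ?mulr_ge0 ?powR_ge0 //.
  by rewrite -rq; apply: cabs_berezin_le_Pplus => //; [exact: ltW | exact: Pfint].
rewrite powRM // EFinM -muleA; apply: lee_wpmul2l => //.
by rewrite lee_fin powR_ge0.
Qed.

Lemma berezin_bound_Pplus (p0 M : R) : 0 < p0 -> Pplus_bound Om K p0 M ->
  berezin_bound Om K p0%:E (S * M).
Proof.
move=> p0pos PB; have := berezin_bound_real p0pos (lexx p0) PB.
rewrite divff ?gt_eqF // powRr1 //; apply: mulr_ge0 PB.1.
exact: le_trans (BR_const_ge1 BK BRK Om0).
Qed.

End berezin_bounds.

Section essential_bound.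
Variables (R : realType) (n : nat).
Local Notation V := 'rV[R[i]]_n.
Variable Om : set V.
Local Notation vintR := (vintR Om).

Definition ess_bounded (M : R) (phi : V -> R[i]) :=
  vintR (fun z => ((M < cabs (phi z))%R : bool)%:R) = 0%E.

Lemma le_vintR_ess_bound (phi : V -> R[i]) (M : R) (u v : V -> R) : 0 <= M ->
  Cmeasurable (restr Om phi) -> ess_bounded M phi ->
  (forall z, Om z -> 0 <= u z) -> (forall z, Om z -> 0 <= v z) ->
  (forall z, Om z -> cabs (phi z) <= M -> u z <= v z) -> (vintR u <= vintR v)%E.
Proof.
move=> M0 mphi phiM u0 v0 uv.
have cabs_restr w : restrR Om (fun z => cabs (phi z)) w = cabs (restr Om phi w).
  by rewrite /restrR /restr; case: asboolP => // _; rewrite cabs0.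
pose N := [set w | M < cabs (restr Om phi w)].
apply: (@le_vintR_ae _ _ _ N) => // [||z Oz nNz].
- have mcabs := Rmeasurable_cabs mphi.
  have := mcabs measurableT _ (measurable_itv `]M, +oo[).
  rewrite setTI; congr measurable; apply/seteqP; split => p /=;
    by rewrite in_itv /= andbT cabs_restr.
- rewrite -phiM /vintR /vint_on; congr vint; apply: funext => w.
  have [Ow|nOw] := pselect (Om w); first by rewrite /N /restr /= (asboolT Ow) asboolb.
  by rewrite /N /restr /= (asboolF nOw) cabs0 asboolb ltNge M0.
- by apply: uv => //; rewrite leNgt; apply: contra_notN nNz; rewrite /N /restr /= asboolT.
Qed.

End essential_bound.

Section berezin_infinite_exponent.
Variables (R : realType) (n : nat).
Local Notation V := 'rV[R[i]]_n.
Variables (Om : set V) (K : V -> V -> R[i]).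
Hypotheses (BK : bergman_kernel Om K) (BRK : property_BR Om K).
Local Notation vintR := (vintR Om).
Local Notation density := (berezin_density Om K).

Lemma cabs_berezin_le_ess phi (M : R) z : 0 <= M -> Om z -> Cmeasurable (restr Om phi) ->
  ess_bounded Om M phi -> cabs (berezin Om K phi z) <= M.
Proof.
move=> M0 Oz mphi phiM.
have d0 w : Om w -> 0 <= density z w by move=> _; exact: berezin_density_ge0.
have Jle : (vintR (fun w => (cabs (phi w) * density z w)%R) <= M%:E)%E.
  rewrite -[M%:E]mule1 -(vintR_berezin_density BK BRK Oz) -vintRZl //.
  apply: (le_vintR_ess_bound M0 mphi phiM) => [w Ow|w Ow|w Ow phiwM].
  - exact: mulr_ge0 (cabs_ge0 _) (d0 w Ow).
  - exact: mulr_ge0 M0 (d0 w Ow).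
  - by apply: ler_wpM2r => //; exact: d0.
have [J EJ _] := vintR_EFin (fun w Ow => mulr_ge0 (cabs_ge0 (phi w)) (d0 w Ow)) (le_lt_trans Jle (ltry _)).
apply: le_trans (cabs_berezin_le BK BRK Oz mphi _) _; first by rewrite EJ ltry.
by move: Jle; rewrite EJ lee_fin.
Qed.

Lemma berezin_bound_infty : berezin_bound Om K +oo%E 1.
Proof.
split; first exact: ler01.
move=> phi [mphi _] _; rewrite mul1e.
have [vol0|vol] := eqVneq (vintR (fun _ => 1)) 0%E.
  (* [Om] is null: every [M] bounds [B phi] essentially *)
  rewrite [X in (X <= _)%E](@eq_ninfty _ _ _) ?leNye // => M.
  apply: ereal_inf_lbound; exists M => //.
  change (ess_bounded Om M (berezin Om K phi)); apply/eqP.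
  rewrite eq_le vintR_ge0 => [|z _]; last by case: (_ < _).
  by rewrite andbT -vol0; apply: le_vintR => z _; case: (_ < _).
apply: ereal_inf_le_tmp => _ [M phiM <-]; exists M => //=.
have {}phiM : ess_bounded Om M phi := phiM.
have M0 : 0 <= M.
  rewrite leNgt; apply/negP => M0; move/eqP: vol; apply; rewrite -phiM.
  apply: eq_vintR => z _.
  by rewrite (lt_le_trans M0 (cabs_ge0 _)).
change (ess_bounded Om M (berezin Om K phi)).
rewrite /ess_bounded -(vintR0 Om); apply: eq_vintR => z Oz.
by rewrite ltNge cabs_berezin_le_ess.
Qed.

End berezin_infinite_exponent.

Theorem proposition1 (R : realType) (n : nat) (Om : set 'rV[R[i]]_n)
  (K : 'rV[R[i]]_n -> 'rV[R[i]]_n -> R[i]) (p0 : R) :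
  (0 < n)%N -> domain Om -> bergman_kernel Om K -> property_BR Om K ->
  1 < p0 -> (exists M : R, Pplus_bound Om K p0 M) ->
  (forall p : \bar R, (p0%:E <= p)%E -> exists C : R, berezin_bound Om K p C) /\
  (berezin_norm Om K p0%:E <= BR_sup Om K * Pplus_norm Om K p0)%E.
Proof.
move=> _ [_ [_ Om0]] BK BRK p0gt1 [M0 PB0].
have p0pos : 0 < p0 by apply: lt_trans p0gt1.
split.
  case=> [r p0r| _ |] //.
    by eexists; apply: berezin_bound_real PB0; rewrite // -lee_fin.
  by exists 1; exact: berezin_bound_infty.
rewrite BR_supE // -ereal_inf_pZl ?(lt_le_trans ltr01 (BR_const_ge1 BK BRK Om0)) //.
apply: le_ereal_inf_tmp => _ [_ [M PB <-] <-]; apply: ereal_inf_lbound.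
by exists (BR_const Om K * M) => //; exact: berezin_bound_Pplus.
Qed.
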